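(* Fix $\lambda\in[0,1)$ and $p\in(0,1]$. Let $\mathbf{v}^0\in\overline{\mathcal{V}}^\infty$ and let $\mathbf{v}(\mathbf{v}^0,\cdot)$ be the unique solution to the fluid model with initial condition $\mathbf{v}^0$. Then $\sup\{i:\mathbf{v}_i(\mathbf{v}^0,t)>0\}<\infty$ for all $t>0$.
   Context: $\mathcal{S}=\{\mathbf{s}\in[0,1]^{\mathbb{Z}_+}:1=\mathbf{s}_0\ge\mathbf{s}_1\ge\cdots\ge0\}$, $\overline{\mathcal{S}}^\infty=\{\mathbf{s}\in\mathcal{S}:\sum_{i\ge1}\mathbf{s}_i<\infty\}$, $\overline{\mathcal{V}}^\infty=\{\mathbf{v}:\mathbf{v}_i=\sum_{j\ge i}\mathbf{s}_j\ \forall i,\text{ for some }\mathbf{s}\in\overline{\mathcal{S}}^\infty\}$. $g_i(\mathbf{v})=p$ if $\mathbf{v}_i>0$, $=\min\{\lambda\mathbf{v}_{i-1},p\}$ if $\mathbf{v}_i=0<\mathbf{v}_{i-1}$, $=0$ if $\mathbf{v}_i=\mathbf{v}_{i-1}=0$. A solution to the fluid model with initial condition $\mathbf{v}^0$ is $\mathbf{v}:[0,\infty)\to\overline{\mathcal{V}}^\infty$ with (0) all coordinates $L$-Lipschitz for a common $L$; (1) $\mathbf{v}(0)=\mathbf{v}^0$; (2) for all $t$, $\mathbf{v}_0-\mathbf{v}_1=1$ and $1\ge\mathbf{v}_i-\mathbf{v}_{i+1}\ge\mathbf{v}_{i+1}-\mathbf{v}_{i+2}\ge0$, $i\ge0$;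 (3) for a.e. $t$ and all $i\ge1$, $\dot{\mathbf{v}}_i=\lambda(\mathbf{v}_{i-1}-\mathbf{v}_i)-(1-p)(\mathbf{v}_i-\mathbf{v}_{i+1})-g_i(\mathbf{v})$. It exists and is unique. *)

From HB Require Import structures.
From mathcomp Require Import all_boot all_order all_algebra.
From mathcomp Require Import all_classical all_reals all_analysis.
Set Implicit Arguments. Unset Strict Implicit. Unset Printing Implicit Defensive.
Import Order.TTheory GRing.Theory Num.Theory.
Import numFieldNormedType.Exports.
Local Open Scope classical_set_scope.
Local Open Scope ring_scope.

Definition in_Sbar {R : realType} (s : nat -> R) : Prop :=
  [/\ s 0%N = 1,
      (forall i, 0 <= s i <= 1),
      (forall i, s i.+1 <= s i) &
      cvgn (series s)].

Definition in_Vbar {R : realType} (v : nat -> R) : Prop :=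
  exists s : nat -> R, in_Sbar s /\
    forall i, v i = limn (fun n => (\sum_(i <= j < n) s j)%R).

(* the function g_i of the fluid model (used for i >= 1) *)
Definition g_fm {R : realType} (lam p : R) (v : nat -> R) (i : nat) : R :=
  if 0 < v i then p
  else if (v i == 0) && (0 < v i.-1) then Num.min (lam * v i.-1) p
  else 0.

(* v : [0,oo) -> V-bar^infty, represented as R -> nat -> R; only t >= 0 matters. *)
Definition fluid_solution {R : realType} (lam p : R) (v0 : nat -> R)
    (v : R -> nat -> R) : Prop :=
  [/\
      (exists L : R, forall i t1 t2, 0 <= t1 -> 0 <= t2 ->
          `|v t1 i - v t2 i| <= L * `|t1 - t2|),
      (forall t, 0 <= t -> in_Vbar (v t)),
      v 0 = v0,
      (forall t, 0 <= t -> v t 0%N - v t 1%N = 1 /\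
         forall i, 1 >= v t i - v t i.+1 /\
                   v t i - v t i.+1 >= v t i.+1 - v t i.+2 /\
                   v t i.+1 - v t i.+2 >= 0) &
      {ae (@lebesgue_measure R), forall t : R, 0 < t -> forall i, (1 <= i)%N ->
         is_derive t 1 (fun u => v u i)
           (lam * (v t i.-1 - v t i) - (1 - p) * (v t i - v t i.+1)
              - g_fm lam p (v t) i)}].

(* Fix t > 0. By Lipschitz continuity v_1 is bounded by some C on [0, t], and
   since i |-> v_i is concave, k (v_k - v_{k+1}) <= v_1 <= C there. Hence for
   k > 2C/p the drift of v_{k+1} is at most lam p/2 - p <= -p/2 wherever
   v_{k+1} > 0; as v^0_{k+1} -> 0 we may also assume v^0_{k+1} < p t/4, so
   v_{k+1} is driven down to 0 before time t.
   The derivative bound only holds almost everywhere, so this last step is a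
   comparison argument for Lipschitz functions: with g x := f x + c x, the
   Lipschitz image of the exceptional null set misses some level y, and at the
   last time g crosses y the function f is differentiable with derivative
   <= -2c, contradicting that g stays above y afterwards. *)
From HB Require Import structures.
From mathcomp Require Import all_boot all_order all_algebra.
From mathcomp Require Import all_classical all_reals all_analysis.
From mathcomp Require Import lra ring zify.
Set Implicit Arguments. Unset Strict Implicit. Unset Printing Implicit Defensive.
Import Order.TTheory GRing.Theory Num.Theory.
Import numFieldNormedType.Exports.
Local Open Scope classical_set_scope.
Local Open Scope ring_scope.

Lemma lipschitz_normr (K : realFieldType) (V W : normedModType K) (A : set V)
    (k : K) (f : V -> W) :
  k.-lipschitz_A f -> `|k|.-lipschitz_A f.
Proof.
move=> Lip xy Axy; apply: le_trans (Lip xy Axy) _.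
by rewrite ler_wpM2r // real_ler_norm // num_real.
Qed.
Arguments lipschitz_normr {K V W A k f} _ _ _.

Section lipschitz_real_functions.
Context {R : realType}.
Local Notation mu := (@lebesgue_measure R).

Lemma lipschitz_le_left (f : R -> R) (K a b : R) :
  K.-lipschitz_(`[a, b]) f -> a <= b ->
  forall x, a <= x <= b -> f x <= f a + `|K| * (b - a).
Proof.
move=> Lip ab x xab; have /andP[ax xb] := xab.
have /= := lipschitz_normr Lip (x, a); rewrite !in_itv /= xab lexx ab.
rewrite [`|x - a|]ger0_norm ?subr_ge0 // => /(_ (conj isT isT)) fxa.
have : `|K| * (x - a) <= `|K| * (b - a) by rewrite ler_wpM2l // lerB.
have := ler_norm (f x - f a); lra.
Qed.

Lemma negligible_open_itv_cover (N : set R) (e : R) :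
  mu.-negligible N -> 0 < e ->
  exists lo hi : nat -> R, N `<=` \bigcup_k (`]lo k, hi k[%classic) /\
    (\sum_(0 <= k <oo) mu `]lo k, hi k[ < e%:E)%E.
Proof.
move=> /negligible_outer_measure N0 e0.
have : ((wlength idfun)^*%mu N)%E \is a fin_num by rewrite N0.
rewrite measurable_realfun.outer_measure_open_itv_cover.
move=> /(lb_ereal_inf_adherent e0) [_ /= [F [Fitv NF] <-]].
rewrite -measurable_realfun.outer_measure_open_itv_cover N0 add0e => Fe.
have hF k : {ab : R * R | F k = `]ab.1, ab.2[%classic} by apply: cid; exact: Fitv.
pose lo k := (sval (hF k)).1; pose hi k := (sval (hF k)).2.
have FkE k : F k = `]lo k, hi k[%classic by rewrite /lo /hi; case: (hF k).
exists lo, hi; split.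
  by move=> x /NF [k _ Fkx]; exists k => //; rewrite -FkE.
apply: le_lt_trans Fe; apply: lee_nneseries => [k _ _|k _]; first exact: measure_ge0.
by rewrite FkE wlength_itv lebesgue_measure_itv.
Qed.

Lemma lipschitz_image_negligible_no_itv (N D : set R) (g : R -> R) (L a b : R) :
  mu.-negligible N -> L.-lipschitz_D g -> a < b ->
  ~ (`]a, b[ `<=` g @` (N `&` D)).
Proof.
move=> N0 Lip ab sub.
pose K := `|L| + 1.
have K0 : 0 < K by rewrite ltr_pwDr.
pose e := (b - a) / (4 * K).
have e0 : 0 < e by rewrite divr_gt0 ?subr_gt0 ?mulr_gt0.
have [lo [hi [NF Fe]]] := negligible_open_itv_cover N0 e0.
pose c k := xget 0 (`]lo k, hi k[ `&` D).
pose G k := ball (g (c k)) (K * (hi k - lo k)).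
have cov : `]a, b[ `<=` \bigcup_k G k.
  move=> _ /sub [x [Nx Dx] <-]; have [k _ Fx] := NF x Nx; exists k => //.
  have [Fc Dc] : (`]lo k, hi k[ `&` D) (c k) by apply: xgetPex; exists x.
  move: Fx Fc; rewrite /= !in_itv /= => /andP[lox xhi] /andP[loc chi].
  have /= Lxc := lipschitz_normr Lip (c k, x) (conj Dc Dx).
  rewrite /G /ball /=; apply: le_lt_trans Lxc _.
  apply: (@le_lt_trans _ _ (`|L| * (hi k - lo k))).
    by rewrite ler_wpM2l // ler_norml; apply/andP; split; lra.
  by rewrite ltr_pM2r ?subr_gt0 ?(lt_trans lox xhi) // /K ltrDl.
have Gle k : (mu (G k) <= (2 * K)%:E * mu `]lo k, hi k[)%E.
  rewrite /G ball_itv !lebesgue_measure_itv /= !lte_fin.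
  by case: ifPn => h; case: ifPn => h'; move: h h'; rewrite -?leNgt => h h';
    rewrite ?mule0 -?EFinD -?EFinM ?lee_fin; nra.
have : ((b - a)%:E <= (2 * K)%:E * e%:E)%E.
  have := @lebesgue_measure_itv R `]a, b[; rewrite /= lte_fin ab -EFinB => <-.
  apply: le_trans (measure_sigma_subadditive mu
    (fun k => measurable_realfun.measurable_ball _ _) (measurable_itv _) cov) _.
  apply: (@le_trans _ _ (\sum_(0 <= k <oo) ((2 * K)%:E * mu `]lo k, hi k[))%E).
    by apply: lee_nneseries => k *; [exact: measure_ge0 | exact: Gle].
  rewrite nneseriesZl // lee_pmul2l ?lte_fin ?mulr_gt0 //; exact: ltW.
have Ke : 2 * K * e = (b - a) / 2 by rewrite /e; field; rewrite gt_eqF.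
rewrite -EFinM lee_fin Ke; lra.
Qed.

Lemma is_derive_right_secant_lt (f : R -> R) (s d m b : R) :
  is_derive s 1 f d -> d < m -> s < b ->
  exists2 x, s < x <= b & f x - f s < m * (x - s).
Proof.
case=> cv <- dm sb.
have [r /= r0 Hr] := @cvgr_lt _ _ _ (dnbhs_filter _) _ _ cv _ dm.
pose h := Num.min (r / 2) (b - s).
have h0 : 0 < h by rewrite lt_min divr_gt0 // subr_gt0 sb.
have hr : h < r.
  by rewrite (le_lt_trans (y := r / 2)) ?ge_min ?lexx // ltr_pdivrMr // ltr_pMr // ltr1n.
exists (h + s); first by rewrite ltrDr h0 -lerBrDr ge_min lexx orbT.
have := Hr h; rewrite /ball_ /= sub0r normrN gtr0_norm // => /(_ hr (lt0r_neq0 h0)).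
by rewrite /GRing.scale /= mulr1 ltr_pdivrMl // addrK mulrC.
Qed.

Lemma lipschitz_last_crossing (g : R -> R) (K a b y : R) :
  K.-lipschitz_(`[a, b]) g -> a <= b -> g a < y < g b ->
  exists s, [/\ a < s < b, g s = y & forall x, s < x <= b -> y < g x].
Proof.
move=> Lip ab /andP[gay ygb].
have Lg x z : a <= x <= b -> a <= z <= b -> `|g x - g z| <= `|K| * `|x - z|.
  by move=> xab zab; have /= := lipschitz_normr Lip (x, z); apply; split; rewrite /= in_itv.
have small z : 0 < z -> `|K| * (z / (`|K| + 1)) < z.
  move=> z0; rewrite mulrA ltr_pdivrMr ?ltr_pwDr //; have := normr_ge0 K; nra.
pose S := [set x | a <= x <= b /\ g x <= y].
have Sa : S a by split; [rewrite lexx ab | exact: ltW].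
have hsup : has_sup S by split; [exists a | exists b => x [/andP[_ ?] _]].
pose s := sup S.
have sab : a <= s <= b.
  by rewrite sup_upper_bound //= ge_sup //; [exists a | move=> x [/andP[_ ?] _]].
have above x : s < x <= b -> y < g x.
  move=> /andP[sx xb]; rewrite ltNge; apply/negP => gxy.
  suff : x <= s by lra.
  by apply: sup_upper_bound => //; split; rewrite // xb andbT; lra.
have gs_le : g s <= y.
  rewrite leNgt; apply/negP => ygs.
  pose del := (g s - y) / (`|K| + 1).
  have del0 : 0 < del by rewrite divr_gt0 ?subr_gt0 ?ltr_pwDr.
  have [e [/andP[ae eb] gey] se] := sup_adherent del0 hsup.
  have es : e <= s by apply: sup_upper_bound => //; split; rewrite // ae eb.
  have := Lg s e sab; rewrite ae eb [`|s - e|]ger0_norm ?subr_ge0 // => /(_ isT).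
  rewrite ler_norml => /andP[_ gse].
  have : `|K| * (s - e) <= `|K| * del by rewrite ler_wpM2l // /s; lra.
  have := small (g s - y); rewrite -/del subr_gt0 => /(_ ygs); lra.
have gs_ge : y <= g s.
  rewrite leNgt; apply/negP => gsy.
  have sb : s < b by rewrite lt_neqAle (andP sab).2 andbT; apply: contraTneq gsy => ->; lra.
  pose del := (y - g s) / (`|K| + 1).
  have del0 : 0 < del by rewrite divr_gt0 ?subr_gt0 ?ltr_pwDr.
  pose x := Num.min (s + del) b.
  have sx : s < x by rewrite lt_min sb andbT ltrDl.
  have xsd : x <= s + del by rewrite ge_min lexx.
  have xab : a <= x <= b by rewrite ge_min lexx orbT andbT; lra.
  have := Lg x s xab sab; rewrite [`|x - s|]gtr0_norm ?subr_gt0 // ler_norml => /andP[_ gxs].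
  have : `|K| * (x - s) <= `|K| * del by rewrite ler_wpM2l //; lra.
  have := small (y - g s); rewrite -/del subr_gt0 => /(_ gsy) hK hle.
  have Sx : S x by split => //; lra.
  have := sup_upper_bound hsup Sx; rewrite -/s; lra.
have gsy : g s = y by apply/eqP; rewrite eq_le gs_le gs_ge.
exists s; split => //.
case/andP: sab => le_as le_sb; rewrite !lt_neqAle le_as le_sb !andbT.
by apply/andP; split; apply/eqP => Es; [rewrite -Es in gsy | rewrite Es in gsy]; lra.
Qed.

Lemma lipschitz_ae_descent_le0 (f : R -> R) (L c T : R) :
  0 < c -> 0 < T -> L.-lipschitz_(`[0, T]) f ->
  {ae mu, forall x, 0 < x < T -> 0 < f x ->
     exists2 d, is_derive x 1 f d & d <= - (2 * c)} ->
  f 0 < c * T -> f T <= 0.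
Proof.
move=> c0 T0 Lip Pae f0; rewrite leNgt; apply/negP => fT.
case: Pae => N [mN N0 notPN].
have Nneg : mu.-negligible N by exists N; split.
pose g x := f x + c * x.
have Lg : (`|L| + c).-lipschitz_(`[0, T]) g.
  move=> [x z] /= xzT; rewrite /g opprD addrACA -mulrBr mulrDl.
  apply: le_trans (ler_normD _ _) _; rewrite normrM gtr0_norm // lerD2r.
  exact: (lipschitz_normr Lip (x, z) xzT).
have [y yab yN] : exists2 y, Num.max (f 0) (c * T) < y < g T &
    ~ (g @` (N `&` `[0, T])) y.
  apply: contrapT => H.
  apply: (lipschitz_image_negligible_no_itv Nneg Lg (_ : Num.max (f 0) (c * T) < g T)).
    by rewrite gt_max /g; apply/andP; split; lra.
  by move=> z zab; apply: contrapT => zN; apply: H; exists z.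
move: yab; rewrite gt_max => /andP[/andP[f0y cTy] ygT].
have gy : g 0 < y < g T by rewrite /g mulr0 addr0 f0y ygT.
have [s [s0T gsy above]] := lipschitz_last_crossing Lg (ltW T0) gy.
have /andP[s0 sT] := s0T.
have Ps : ~ N s.
  by move=> Ns; apply: yN; exists s => //; split => //; rewrite /= in_itv /= !ltW.
have fs : 0 < f s by move: gsy; rewrite /g; nra.
have [d fd dc] : exists2 d, is_derive s 1 f d & d <= - (2 * c).
  by apply: contrapT => nP; apply/Ps/notPN => /(_ s0T fs).
have [|x /andP[sx xT] fx] := is_derive_right_secant_lt (m := - c) fd _ sT; first lra.
have := above x; rewrite sx xT => /(_ isT); move: gsy fx; rewrite /g; nra.
Qed.

End lipschitz_real_functions.

Section tail_sums.
Context {R : realType}.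

Lemma in_Vbar_tailE (w : nat -> R) : in_Vbar w ->
  exists s : nat -> R, [/\ forall j, 0 <= s j, cvgn (series s) &
    forall i, w i = limn (series s) - series s i].
Proof.
move=> [s [[_ s01 _ scv] wE]]; have s0 j : 0 <= s j by case/andP: (s01 j).
exists s; split => // i; rewrite wE; apply: cvg_lim => //.
apply: cvg_trans (cvgB scv (cvg_cst (series s i))); apply: near_eq_cvg.
near=> n; have ni : (i <= n)%N by near: n; exists i.
by rewrite /series /= !fctE (big_cat_nat (leq0n i) ni) /= addrAC subrr add0r.
Unshelve. all: by end_near.
Qed.

Lemma in_Vbar_ge0 (w : nat -> R) : in_Vbar w -> forall i, 0 <= w i.
Proof.
move=> /in_Vbar_tailE [s [s0 scv wE]] i; rewrite wE subr_ge0.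
apply: (nondecreasing_cvgn_le _ scv) => m n; exact: nondecreasing_series.
Qed.

Lemma in_Vbar_cvg0 (w : nat -> R) : in_Vbar w -> w @ \oo --> 0.
Proof.
move=> /in_Vbar_tailE [s [_ scv wE]]; rewrite (funext wE) -(subrr (limn (series s))).
exact: cvgB (cvg_cst _) scv.
Qed.

End tail_sums.

Lemma concave_seq_diff_le (R : realDomainType) (w : nat -> R) :
  (forall i, w i.+1 - w i.+2 <= w i - w i.+1) ->
  forall k, k%:R * (w k - w k.+1) <= w 1%N - w k.+1.
Proof.
move=> hw; elim=> [|k IHk]; first by rewrite mul0r subrr.
have : k%:R * (w k.+1 - w k.+2) <= k%:R * (w k - w k.+1) by rewrite ler_wpM2l.
by rewrite -natr1 mulrDl mul1r; lra.
Qed.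

Section fluid_model.
Context {R : realType} (lam p : R) (v0 : nat -> R) (v : R -> nat -> R).
Hypotheses (hlam : 0 <= lam < 1) (hp : 0 < p <= 1)
  (hv : fluid_solution lam p v0 v).
Local Notation mu := (@lebesgue_measure R).

Lemma fluid_lipschitz : exists L, forall i T, L.-lipschitz_(`[0, T]) (v^~ i).
Proof.
case: hv => [[L Lip] _ _ _ _]; exists L => i T [x y] /=.
by rewrite !in_itv /= => -[/andP[x0 _] /andP[y0 _]]; exact: Lip.
Qed.

Lemma fluid_ge0 u i : 0 <= u -> 0 <= v u i.
Proof. by case: hv => _ hV _ _ _ u0; exact: in_Vbar_ge0 (hV u u0) i. Qed.

Lemma fluid_diff_ge0 u i : 0 <= u -> 0 <= v u i - v u i.+1.
Proof.
case: hv => _ _ _ h2 _ u0; have [v01 hi] := h2 u u0.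
by case: i => [|i]; [rewrite v01 | case: (hi i) => _ []].
Qed.

Lemma fluid_diff_nonincr u i : 0 <= u -> v u i.+1 - v u i.+2 <= v u i - v u i.+1.
Proof. by case: hv => _ _ _ h2 _ u0; case: (h2 u u0) => _ /(_ i) [_ []]. Qed.

Lemma fluid_ae_drift k : {ae mu, forall x, 0 < x -> 0 < v x k.+1 ->
  exists2 d, is_derive x 1 (v^~ k.+1) d & d <= lam * (v x k - v x k.+1) - p}.
Proof.
case: hv => _ _ _ _; apply: filterS; first exact: (ae_filter_ringOfSetsType mu).
move=> x Px x0 vx.
exists (lam * (v x k - v x k.+1) - (1 - p) * (v x k.+1 - v x k.+2) - p).
  by have := Px x0 k.+1 isT; rewrite /g_fm vx.
have : 0 <= (1 - p) * (v x k.+1 - v x k.+2).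
  by rewrite mulr_ge0 ?fluid_diff_ge0 ?subr_ge0 ?(andP hp).2 // ltW.
lra.
Qed.

Lemma fluid_tail_coord_le0 (t C : R) (k : nat) : 0 < t ->
  (forall u, 0 <= u <= t -> v u 1%N <= C) -> 2 * C < k%:R * p ->
  v 0 k.+1 < p / 4 * t -> v t k.+1 <= 0.
Proof.
move=> t0 v1C kC v0k; have [L Lip] := fluid_lipschitz; have /andP[p0 p1] := hp.
apply: (lipschitz_ae_descent_le0 (c := p / 4) _ t0 (Lip k.+1 t)) => //.
  by rewrite divr_gt0.
apply: filterS (fluid_ae_drift k); first exact: (ae_filter_ringOfSetsType mu).
move=> x Px /andP[x0 xt] vx.
have [d dx dle] := Px x0 vx; exists d => //.
have D0 := fluid_diff_ge0 k (ltW x0).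
have Dk : k%:R * (v x k - v x k.+1) <= C.
  have := concave_seq_diff_le (fun i => fluid_diff_nonincr i (ltW x0)) k.
  have := fluid_ge0 k.+1 (ltW x0); have := v1C x; rewrite (ltW x0) (ltW xt).
  move=> /(_ isT); lra.
have : lam * (v x k - v x k.+1) <= v x k - v x k.+1.
  by rewrite ler_piMl // ltW // (andP hlam).2.
have := ler0n R k; nra.
Qed.

End fluid_model.

Theorem proposition3 (R : realType) (lam p : R)
    (hlam : 0 <= lam < 1) (hp : 0 < p <= 1)
    (v0 : nat -> R) (hv0 : in_Vbar v0)
    (v : R -> nat -> R) (hv : fluid_solution lam p v0 v) :
  forall t : R, 0 < t ->
    exists N : nat, forall i : nat, 0 < v t i -> (i <= N)%N.
Proof.
move=> t t0; have /andP[p0 _] := hp.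
have [L Lip] := fluid_lipschitz hv.
pose C := v 0 1%N + `|L| * t.
have v1C u : 0 <= u <= t -> v u 1%N <= C.
  by move/(lipschitz_le_left (Lip 1%N t) (ltW t0)); rewrite subr0.
have [K _ largeK] := nbhs_infty_gtr (2 * C / p).
have [N1 _ smallN1] : \forall i \near \oo, v0 i < p / 4 * t.
  by apply: (cvgr_lt _ (in_Vbar_cvg0 hv0)); rewrite mulr_gt0 ?divr_gt0.
exists (N1 + K)%N => -[//|k] vtk; rewrite leqNgt; apply/negP => kN.
have kC : 2 * C < k%:R * p by rewrite -ltr_pdivrMr //; apply: largeK => /=; lia.
have v0k : v 0 k.+1 < p / 4 * t by case: hv => _ _ -> _ _; apply: smallN1 => /=; lia.
have := fluid_tail_coord_le0 hlam hp hv t0 v1C kC v0k; lra.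
Qed.
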